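(* Let $\mathcal{L}:\mathbb{R}^d\to\mathbb{R}$ be differentiable on $\mathbb{R}^d\setminus\{\mathbf{0}\}$ and radially invariant ($\mathcal{L}(\rho\mathbf{x})=\mathcal{L}(\mathbf{x})$ for all $\rho>0$). Consider the generic optimization scheme $$\mathbf{x}_{k+1}=\mathbf{x}_k-\eta_k\,\mathbf{a}_k\oslash\mathbf{b}_k,\qquad \mathbf{a}_k=\beta\mathbf{a}_{k-1}+\nabla\mathcal{L}(\mathbf{x}_k)+\lambda\mathbf{x}_k,$$ with $\eta_k>0$, $\beta,\lambda\in\mathbb{R}$, $\mathbf{a}_{-1}=\mathbf{0}$, and $\mathbf{b}_k\in\mathbb{R}^d$ having all entries nonzero. Fix a step $k$ with $\mathbf{x}_k\neq\mathbf{0}$, write $r_k=\|\mathbf{x}_k\|$, $\mathbf{u}_k=\mathbf{x}_k/r_k$, and define $$\mathbf{c}_k=r_k\,\mathbf{a}_k\oslash\frac{\mathbf{b}_k}{d^{-1/2}\|\mathbf{b}_k\|},\qquad A_k=\frac{\eta_k}{r_k^2\,d^{-1/2}\|\mathbf{b}_k\|},\qquad \eta^e_k=A_k\bigl(1-A_k\langle\mathbf{c}_k,\mathbf{u}_k\rangle\bigr)^{-1},$$ and $\mathbf{c}_k^{\perp}=\mathbf{c}_k-\langle\mathbf{c}_k,\mathbf{u}_k\rangle\mathbf{u}_k$. Assume $1-A_k\langle\mathbf{c}_k,\mathbf{u}_k\rangle>0$. Then $\mathbf{x}_{k+1}\neq\mathbf{0}$, and with $\mathbf{u}_{k+1}=\mathbf{x}_{k+1}/\|\mathbf{x}_{k+1}\|$,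 $$\mathbf{u}_{k+1}=\frac{\mathbf{u}_k-\eta^e_k\mathbf{c}_k^{\perp}}{\sqrt{1+(\eta^e_k\|\mathbf{c}_k^{\perp}\|)^2}};$$ moreover $$\mathbf{u}_{k+1}=\operatorname{Exp}_{\mathbf{u}_k}\!\Bigl(-\bigl[1+O\bigl((\eta^e_k\|\mathbf{c}_k^{\perp}\|)^2\bigr)\bigr]\eta^e_k\mathbf{c}_k^{\perp}\Bigr),$$ where the bracketed scalar factor is $1+O(z^2)$ as $z=\eta^e_k\|\mathbf{c}_k^{\perp}\|\to 0$.
   Context: $\oslash$ denotes element-wise (Hadamard) division, $\|\cdot\|$ the Euclidean norm, $\langle\cdot,\cdot\rangle$ the Euclidean inner product. $\mathcal{S}_{d-1}=\{\mathbf{u}\in\mathbb{R}^d:\|\mathbf{u}\|=1\}$ is the unit sphere with its canonical (angular) metric, and $\operatorname{Exp}_{\mathbf{u}}$ is its exponential map at $\mathbf{u}$: for $\mathbf{w}$ tangent at $\mathbf{u}$ ($\langle\mathbf{w},\mathbf{u}\rangle=0$), $\operatorname{Exp}_{\mathbf{u}}(\mathbf{w})=\cos(\|\mathbf{w}\|)\mathbf{u}+\sin(\|\mathbf{w}\|)\mathbf{w}/\|\mathbf{w}\|$ (and $\operatorname{Exp}_{\mathbf{u}}(\mathbf{0})=\mathbf{u}$). *)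

From HB Require Import structures.
From mathcomp Require Import all_boot all_order all_algebra.
From mathcomp Require Import all_classical all_reals all_analysis.
Set Implicit Arguments. Unset Strict Implicit. Unset Printing Implicit Defensive.
Import Order.TTheory GRing.Theory Num.Theory.
Import numFieldNormedType.Exports.
Local Open Scope ring_scope.

Section Defs.
Variables (R : realType) (d : nat).

(* Euclidean inner product and norm on R^d = 'rV[R]_d
   (the library's norm on matrices is the max norm, so we define these). *)
Definition dotp (u v : 'rV[R]_d) : R := \sum_(i < d) u 0 i * v 0 i.
Definition enorm (u : 'rV[R]_d) : R := Num.sqrt (dotp u u).

Definition hdiv (a b : 'rV[R]_d) : 'rV[R]_d := \row_(i < d) (a 0 i / b 0 i).

Definition grad (L : 'rV[R]_d -> R) (x : 'rV[R]_d) : 'rV[R]_d :=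
  \row_(i < d) ('D_(delta_mx 0 i) L x).

Definition sphExp (u w : 'rV[R]_d) : 'rV[R]_d :=
  if w == 0 then u
  else cos (enorm w) *: u + (sin (enorm w) / enorm w) *: w.
End Defs.

From HB Require Import structures.
From mathcomp Require Import all_boot all_order all_algebra.
From mathcomp Require Import all_classical all_reals all_analysis.
From mathcomp Require Import ring lra.
Import Order.TTheory GRing.Theory Num.Theory.
Import numFieldNormedType.Exports.
Local Open Scope ring_scope.

(* The new iterate x_k - eta_k a_k / b_k is the positive multiple
   r_k (1 - A_k <c_k, u_k>) of u_k - etae c_k^perp: the radial part of the step
   only rescales.  For w tangent at the unit vector u, the point u + w lies at
   angle atan |w| from u on the great circle through w, so its normalization is
   Exp_u ((atan |w| / |w|) w); and atan z / z = 1 + O(z^2). *)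

Section AtanRatio.
Context {R : realType}.
Implicit Types z : R.

Lemma atan_sub_le_cube z : 0 < z -> `|atan z - z| <= z ^+ 3.
Proof.
move=> z_gt0.
have [c /andP[c_gt0 c_lt_z] mvt] : exists2 c, c \in `]0, z[ &
    atan z - atan 0 = (1 + c ^+ 2)^-1 * (z - 0).
  apply: (@MVT R atan (fun t => (1 + t ^+ 2)^-1)) => //.
  by apply: continuous_subspaceT => t; exact: continuous_atan.
move: mvt; rewrite atan0 !subr0 => ->.
have c2_gt0 : 0 < 1 + c ^+ 2 by rewrite ltr_pwDl // sqr_ge0.
have -> : (1 + c ^+ 2)^-1 * z - z = - (c ^+ 2 / (1 + c ^+ 2) * z).
  by field; rewrite gt_eqF.
rewrite normrN ger0_norm; last by rewrite mulr_ge0 // ?divr_ge0 ?sqr_ge0 ?ltW.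
rewrite [z ^+ 3]exprSr ler_pM2r // ler_pdivrMr //.
have : c ^+ 2 <= z ^+ 2 by rewrite lerXn2r // ?ltW // nnegrE ltW.
have : 0 <= c ^+ 2 * z ^+ 2 by rewrite mulr_ge0 // sqr_ge0.
nra.
Qed.

Lemma normr_atan_sub_le_cube z : `|atan z - z| <= `|z| ^+ 3.
Proof.
case: (ltgtP z 0) => [z_lt0|z_gt0|->].
- have := @atan_sub_le_cube (- z); rewrite oppr_gt0 => /(_ z_lt0).
  by rewrite atanN -opprD normrN (ltr0_norm z_lt0).
- by rewrite (gtr0_norm z_gt0); apply: atan_sub_le_cube.
- by rewrite atan0 subr0 normr0 expr0n.
Qed.

Definition atan_ratio z := if z == 0 then 1 else atan z / z.

Lemma atan_ratio_sub1_bigO :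
  (fun z => atan_ratio z - 1) =O_ (nbhs (0 : R)) (fun z => z ^+ 2).
Proof.
apply/eqO_exP; exists 1 => //; apply: nearW => z /=; rewrite /atan_ratio.
case: eqP => [->|/eqP z_neq0]; first by rewrite subrr normr0 mul1r normr_ge0.
have -> : atan z / z - 1 = (atan z - z) / z by field.
rewrite normrM normfV mul1r normrX ler_pdivrMr ?normr_gt0 // -exprSr.
exact: normr_atan_sub_le_cube.
Qed.

Lemma sin_atan z : sin (atan z) = z / Num.sqrt (1 + z ^+ 2).
Proof.
have sqrt_gt0 : 0 < Num.sqrt (1 + z ^+ 2).
  by rewrite sqrtr_gt0; have := sqr_ge0 z; lra.
rewrite -{2}[z]atanK /tan -cos_atan divfK // cos_atan invr_eq0 gt_eqF //.
Qed.

End AtanRatio.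

Section EuclideanRow.
Context {R : realType} {d : nat}.
Implicit Types (u v w : 'rV[R]_d) (k : R).

Lemma dotpC u v : dotp u v = dotp v u.
Proof. by apply: eq_bigr => i _; rewrite mulrC. Qed.

Lemma dotpDl u v w : dotp (u + v) w = dotp u w + dotp v w.
Proof. by rewrite /dotp -big_split; apply: eq_bigr => i _; rewrite mxE mulrDl. Qed.

Lemma dotpZl k u w : dotp (k *: u) w = k * dotp u w.
Proof. by rewrite /dotp mulr_sumr; apply: eq_bigr => i _; rewrite mxE mulrA. Qed.

Lemma dotpNl u w : dotp (- u) w = - dotp u w.
Proof. by rewrite -scaleN1r dotpZl mulN1r. Qed.

Lemma dotpDr u v w : dotp w (u + v) = dotp w u + dotp w v.
Proof. by rewrite dotpC dotpDl !(dotpC w). Qed.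

Lemma dotpZr k u w : dotp w (k *: u) = k * dotp w u.
Proof. by rewrite dotpC dotpZl dotpC. Qed.

Lemma dotpNr u w : dotp w (- u) = - dotp w u.
Proof. by rewrite dotpC dotpNl dotpC. Qed.

Lemma dotp_ge0 u : 0 <= dotp u u.
Proof. by apply: sumr_ge0 => i _; rewrite -expr2 sqr_ge0. Qed.

Lemma enorm_sqr u : enorm u ^+ 2 = dotp u u.
Proof. by rewrite /enorm sqr_sqrtr // dotp_ge0. Qed.

Lemma enorm0 : enorm (0 : 'rV[R]_d) = 0.
Proof. by rewrite /enorm /dotp big1 ?sqrtr0 // => i _; rewrite mxE mul0r. Qed.

Lemma enormZ k u : enorm (k *: u) = `|k| * enorm u.
Proof.
by rewrite /enorm dotpZl dotpZr mulrA -expr2 sqrtrM ?sqr_ge0 // sqrtr_sqr.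
Qed.

Lemma enorm_gt0 u : u != 0 -> 0 < enorm u.
Proof.
move=> u_neq0; rewrite /enorm sqrtr_gt0 lt_def dotp_ge0 andbT.
apply: contra u_neq0 => /eqP /psumr_eq0P sq_eq0; apply/eqP/rowP => i.
have /eqP := sq_eq0 (fun j _ => sqr_ge0 (u 0 j)) i isT.
by rewrite mxE mulf_eq0 orbb => /eqP.
Qed.

Lemma enorm_eq0 u : (enorm u == 0) = (u == 0).
Proof.
have [->|u_neq0] := eqVneq u 0; first by rewrite enorm0 !eqxx.
by rewrite gt_eqF ?enorm_gt0.
Qed.

Lemma normalizeZ k u : 0 < k -> (enorm (k *: u))^-1 *: (k *: u) = (enorm u)^-1 *: u.
Proof.
move=> k_gt0.
by rewrite enormZ gtr0_norm // scalerA invfM mulrAC mulVf ?gt_eqF ?mul1r.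
Qed.

Lemma hdivZr k u v : hdiv u (k *: v) = k^-1 *: hdiv u v.
Proof. by apply/rowP => i; rewrite !mxE invfM mulrCA. Qed.

Lemma row_neq0_dim_gt0 u : u != 0 -> (0 < d)%N.
Proof. by case: d u => // u; rewrite thinmx0 eqxx. Qed.

Section Tangent.
Variables u w : 'rV[R]_d.
Hypotheses (u_unit : dotp u u = 1) (uw_orth : dotp u w = 0).

Lemma enormD_orth : enorm (u + w) = Num.sqrt (1 + enorm w ^+ 2).
Proof.
rewrite {1}/enorm dotpDl !dotpDr u_unit (dotpC w u) uw_orth enorm_sqr.
by rewrite addr0 add0r.
Qed.

Lemma normalize_sphExp :
  (enorm (u + w))^-1 *: (u + w) = sphExp u (atan_ratio (enorm w) *: w).
Proof.
rewrite enormD_orth /sphExp /atan_ratio enorm_eq0.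
have [->|w_neq0] := eqVneq w 0.
  by rewrite enorm0 expr0n /= !addr0 sqrtr1 invr1 scale1r scaler0 eqxx.
set z := enorm w; have z_gt0 : 0 < z by apply: enorm_gt0.
have atan_gt0 : 0 < atan z by rewrite -atan0 lt_atan.
have sqrt_gt0 : 0 < Num.sqrt (1 + z ^+ 2).
  by rewrite sqrtr_gt0; have := sqr_ge0 z; lra.
rewrite scaler_eq0 (negbTE w_neq0) orbF mulf_eq0 invr_eq0 !gt_eqF //=.
rewrite enormZ gtr0_norm ?divr_gt0 // -/z divfK ?gt_eqF //.
rewrite cos_atan sin_atan scalerA scalerDr; congr (_ + _ *: _).
by field; rewrite !gt_eqF.
Qed.

End Tangent.
End EuclideanRow.

Lemma radial_tangent_split (K : fieldType) (V : lmodType K) (x c : V) (r A t : K) :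
  1 - A * t != 0 ->
  r *: x - (r * A) *: c = (r * (1 - A * t)) *: (x - (A / (1 - A * t)) *: (c - t *: x)).
Proof.
move=> m_neq0; rewrite !scalerBr !scalerA opprB addrA -scalerDl.
by congr (_ *: _ - _ *: _); field.
Qed.

Theorem theorem2 (R : realType) :
  exists phi : R -> R,
    (fun z => phi z - 1) =O_ (nbhs (0 : R)) (fun z => z ^+ 2) /\
  forall (d : nat) (L : 'rV[R]_d -> R)
    (x a b : nat -> 'rV[R]_d) (eta : nat -> R) (beta lambda : R),
    (forall y : 'rV[R]_d, y != 0 -> differentiable L y) ->
    (forall (rho : R) (y : 'rV[R]_d), 0 < rho -> L (rho *: y) = L y) ->
    (forall k, 0 < eta k) ->
    (forall k (i : 'I_d), b k 0 i != 0) ->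
    a 0%N = grad L (x 0%N) + lambda *: x 0%N ->
    (forall k, a k.+1 = beta *: a k + grad L (x k.+1) + lambda *: x k.+1) ->
    (forall k, x k.+1 = x k - eta k *: hdiv (a k) (b k)) ->
  forall k : nat, x k != 0 ->
    let r := enorm (x k) in
    let u := r^-1 *: x k in
    let s := (Num.sqrt (d%:R))^-1 * enorm (b k) in
    let c := r *: hdiv (a k) (s^-1 *: b k) in
    let A := eta k / (r ^+ 2 * s) in
    let etae := A * (1 - A * dotp c u)^-1 in
    let cperp := c - dotp c u *: u in
    0 < 1 - A * dotp c u ->
    x k.+1 != 0 /\
    let u' := (enorm (x k.+1))^-1 *: x k.+1 in
    u' = (Num.sqrt (1 + (etae * enorm cperp) ^+ 2))^-1 *: (u - etae *: cperp) /\
    u' = sphExp u (- ((phi (etae * enorm cperp) * etae) *: cperp)).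
Proof.
exists (@atan_ratio R); split; first exact: atan_ratio_sub1_bigO.
move=> d L x a b eta beta lambda _ _ eta_gt0 b_neq0 _ _ step k xk_neq0.
move=> r u s c A etae cperp m_gt0.
have r_gt0 : 0 < r by apply: enorm_gt0.
have d_gt0 := row_neq0_dim_gt0 (x k) xk_neq0.
have bk_neq0 : b k != 0.
  by apply: contraNneq (b_neq0 k (Ordinal d_gt0)) => ->; rewrite mxE.
have s_gt0 : 0 < s by rewrite mulr_gt0 ?enorm_gt0 // invr_gt0 sqrtr_gt0 ltr0n.
have A_gt0 : 0 < A by rewrite divr_gt0 // mulr_gt0 // exprn_gt0.
have etae_gt0 : 0 < etae by rewrite mulr_gt0 // invr_gt0.
have u_unit : dotp u u = 1.
  by rewrite dotpZl dotpZr -enorm_sqr -/r; field; rewrite gt_eqF.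
have x_radial : x k = r *: u by rewrite scalerA mulfV ?gt_eqF // scale1r.
have hdiv_c : hdiv (a k) (b k) = (r * s)^-1 *: c.
  by rewrite /c hdivZr invrK !scalerA -mulrA mulVf ?scale1r // mulf_neq0 ?gt_eqF.
clearbody c u.
have step_coef : eta k / (r * s) = r * A by rewrite /A; field; rewrite !gt_eqF.
have x_next : x k.+1 = (r * (1 - A * dotp c u)) *: (u - etae *: cperp).
  rewrite step x_radial hdiv_c scalerA step_coef.
  by rewrite (@radial_tangent_split _ _ _ _ _ _ (dotp c u)) ?gt_eqF.
set w := - (etae *: cperp) in x_next *.
have cperp_orth : dotp u cperp = 0.
  by rewrite /cperp dotpDr dotpNr dotpZr u_unit mulr1 dotpC subrr.
have w_orth : dotp u w = 0 by rewrite dotpNr dotpZr cperp_orth mulr0 oppr0.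
have enorm_w : enorm w = etae * enorm cperp.
  by rewrite /w -scaleNr enormZ normrN gtr0_norm.
have uw_neq0 : u + w != 0.
  by rewrite -enorm_eq0 enormD_orth // gt_eqF // sqrtr_gt0 ltr_pwDl ?sqr_ge0.
split; first by rewrite x_next scaler_eq0 negb_or uw_neq0 andbT mulf_neq0 ?gt_eqF.
move=> u'; rewrite /u' x_next normalizeZ; last exact: mulr_gt0.
split; first by rewrite enormD_orth // enorm_w.
by rewrite normalize_sphExp // enorm_w /w scalerN scalerA.
Qed.
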